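(* Let $d$ be a positive integer and let $\{\mathcal{F}^{(n)}\}_{n\in\mathbb{N}}$ be a sequence of degree-$d$ factors, all with the same dimension vector $(M_1,\dots,M_d)$. Then there exists a fully regular sequence $\{\mathcal{H}^{(n)}\}_{n\in\mathbb{N}}$ of degree-$d$ factors that is a refinement of $\{\mathcal{F}^{(n)}\}$.
   Context: A degree-$d$ factor is a tuple $(P_1,\dots,P_K)$ of polynomials $\mathbb{F}_2^{m}\to\mathbb{F}_2$ (for some $m$, which may depend on $n$ in a sequence) of degree at most $d$; its dimension vector is $(M_1,\dots,M_d)$ where $M_\ell$ is the number of $P_i$ of degree exactly $\ell$, and $K=\sum_\ell M_\ell$. For $P$ not identically zero and $\ell\ge1$, $\operatorname{rank}_{\ell}(P)$ is the smallest positive integer $k$ with $P=\Gamma(Q_1,\dots,Q_k)$ for polynomials $Q_j$ of degree at most $\ell$ and some $\Gamma\colon\mathbb{F}_2^k\to\mathbb{F}_2$. A factor is $r$-regular if every nonzero linear combination $\sum_i\lambda_iP_i$ has $\operatorname{rank}_{\ell-1}>r$, where $\ell=\max_i\deg(\lambda_iP_i)$. A sequence of factors $\{\mathcal{F}^{(n)}\}$ is $r$-regular if there is $N_0$ such that $\mathcal{F}^{(n)}$ is $r$-regular for all $n\ge N_0$, and fully regular if it is $r$-regular for every $r\in\mathbb{N}$. In a sequence of factors, all factors have the same degree bound and the same dimension vector. A sequence $\{\mathcal{G}^{(n)}\}$ (of dimension $L$) refines $\{\mathcal{F}^{(n)}\}$ (of dimension $K$) if there are a strictly increasing $g\colon\mathbb{N}\to\mathbb{N}$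 and a single $\Gamma\colon\mathbb{F}_2^L\to\mathbb{F}_2^K$ such that $\Gamma(\mathcal{G}^{(n)})=\mathcal{F}^{(g(n))}$ as functions for all $n$. *)

(* F_2 is modelled by bool (addition = xor = addb). *)
From mathcomp Require Import all_boot.
Set Implicit Arguments. Unset Strict Implicit. Unset Printing Implicit Defensive.

Definition pt (m : nat) := {ffun 'I_m -> bool}.
(* functions F_2^m -> F_2 (every such function is a polynomial) *)
Definition fn (m : nat) := pt m -> bool.

(* coefficient of the monomial prod_{i in S} x_i in the algebraic normal form
   (unique multilinear representation) of f: Moebius inversion. *)
Definition anf_coef (m : nat) (f : fn m) (S : {set 'I_m}) : bool :=
  \big[addb/false]_(x : pt m | [set i | x i] \subset S) f x.

(* degree of f: largest size of a monomial in its ANF (0 for constants) *)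
Definition deg (m : nat) (f : fn m) : nat :=
  \max_(S : {set 'I_m} | anf_coef f S) #|S|.

Definition factor (m K : nat) := 'I_K -> fn m.

Definition dimv (m K : nat) (F : factor m K) (l : nat) : nat :=
  #|[set i : 'I_K | deg (F i) == l]|.

Definition has_dimvec (d m K : nat) (F : factor m K) (M : nat -> nat) : Prop :=
  (forall i, deg (F i) <= d) /\
  (forall l, 1 <= l <= d -> dimv F l = M l) /\
  K = \sum_(1 <= l < d.+1) M l.

Definition factor_seq (d K : nat) (m : nat -> nat)
  (F : forall n, factor (m n) K) : Prop :=
  exists M : nat -> nat, forall n, has_dimvec d (F n) M.

Definition rank_le (m : nat) (l : nat) (P : fn m) (r : nat) : Prop :=
  exists k, 0 < k <= r /\
  exists Q : 'I_k -> fn m, (forall j, deg (Q j) <= l) /\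
  exists Gamma : {ffun 'I_k -> bool} -> bool,
    forall x, P x = Gamma [ffun j => Q j x].

Definition lincomb (m K : nat) (F : factor m K) (lam : {ffun 'I_K -> bool})
  : fn m := fun x => \big[addb/false]_(i | lam i) F i x.

Definition lindeg (m K : nat) (F : factor m K) (lam : {ffun 'I_K -> bool}) : nat :=
  \max_(i | lam i) deg (F i).

Definition regular (r m K : nat) (F : factor m K) : Prop :=
  forall lam : {ffun 'I_K -> bool}, (exists i, lam i) ->
    ~ rank_le (lindeg F lam).-1 (lincomb F lam) r.

Definition seq_regular (r K : nat) (m : nat -> nat)
  (F : forall n, factor (m n) K) : Prop :=
  exists N0, forall n, N0 <= n -> regular r (F n).

Definition fully_regular (K : nat) (m : nat -> nat)
  (F : forall n, factor (m n) K) : Prop :=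
  forall r, seq_regular r F.

(* An induction on the dimension vector, ordered lexicographically from the top degree down.
   If a sequence of factors is not fully regular, then for some r infinitely many of its
   members have a nonzero combination sum_i lam_i P_i, of maximal degree l attained at some
   P_i0, that is a function Gam of r polynomials Q_j of degree < l.  Along a subsequence on
   which all the finite data (degrees, lam, i0, Gam, the degrees of the Q_j and the values of
   the constant ones) are fixed, replace P_i0 by the nonconstant Q_j: P_i0 is recovered as
   Gam(Q) plus the other terms of the combination, and the new dimension vector has one
   fewer polynomial of degree l and is unchanged above l, hence is lexicographically
   smaller.  Lexicographic order on d-tuples of naturals is well founded, and refinements
   compose. *)

From mathcomp Require Import all_boot order zify.
From mathcomp Require ssrcomplements.
From Stdlib Require Import Classical ClassicalEpsilon.
Set Implicit Arguments. Unset Strict Implicit. Unset Printing Implicit Defensive.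

Definition infinitely_often (P : nat -> Prop) : Prop := forall N, exists2 n, N <= n & P n.

Lemma often_not_eventually (P : nat -> Prop) :
  ~ (exists N, forall n, N <= n -> P n) -> infinitely_often (fun n => ~ P n).
Proof.
move=> not_ev N; apply: NNPP => not_often; apply: not_ev; exists N => n le_Nn.
by apply: NNPP => not_Pn; apply: not_often; exists n.
Qed.

Lemma often_pigeon (T : finType) (P : nat -> T -> Prop) :
  infinitely_often (fun n => exists t, P n t) -> exists t, infinitely_often (P^~ t).
Proof.
move=> often_P; apply: NNPP => no_t.
have /fin_all_exists [N N_P] : forall t, exists N, forall n, N <= n -> ~ P n t.
  move=> t; apply: NNPP => not_ev; apply: no_t; exists t => M.
  apply: NNPP => not_often; apply: not_ev; exists M => n le_Mn Pnt.
  by apply: not_often; exists n.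
have [n le_n [t Pnt]] := often_P (\max_t N t).
by apply: (N_P t n) => //; apply: leq_trans le_n; apply: leq_bigmax.
Qed.

Lemma often_subseq (P : nat -> Prop) :
  infinitely_often P -> exists g, (forall k, g k < g k.+1) /\ forall k, P (g k).
Proof.
move=> often_P.
have [next next_P] : exists next, forall N, N <= next N /\ P (next N).
  by apply: (choice (fun N n => N <= n /\ P n)) => N; have [n] := often_P N; exists n.
exists (fun k => iter k (fun n => next n.+1) (next 0)).
by split=> [k|[|k]] /=; [exact: (proj1 (next_P _)) | exact: (proj2 (next_P _))..].
Qed.

Lemma dependent_choice (A : Type) (B : A -> Type) (P : forall a, B a -> Prop) :
  (forall a, exists b, P a b) -> exists f : forall a, B a, forall a, P a (f a).
Proof.
move=> ex_P; exists (fun a => proj1_sig (constructive_indefinite_description _ (ex_P a))).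
by move=> a; exact: proj2_sig.
Qed.

Lemma iter_addb (b : bool) n : iter n (addb b) false = b && odd n.
Proof. by elim: n => [|n /= ->]; [rewrite andbF | case: b]. Qed.

Lemma deg_false m : deg (fun _ : pt m => false) = 0.
Proof. by apply/eqP; rewrite -leqn0; apply/bigmax_leqP => S; rewrite /anf_coef big1. Qed.

Lemma card_pt_subset m (S : {set 'I_m}) :
  #|[set y : pt m | [set i | y i] \subset S]| = 2 ^ #|S|.
Proof.
rewrite -card_powerset -(@on_card_preimset _ _ (fun y : pt m => [set i | y i])).
  by apply: eq_card => y; rewrite !inE.
exists (fun A : {set 'I_m} => [ffun i => i \in A]) => [y _ | A _].
  by apply/ffunP => i; rewrite ffunE inE.
by apply/setP => i; rewrite inE ffunE.
Qed.

Lemma deg_eq0_const m (f : fn m) : deg f = 0 -> forall x, f x = f [ffun => false].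
Proof.
move=> deg0 x; move: {2}#|_| (leqnn #|[set i | x i]|) => k.
elim: k x => [|k IH] x le_xk.
  congr f; apply/ffunP => i; rewrite ffunE; apply/negbTE.
  by apply: contraTN le_xk => xi; rewrite -ltnNge; apply/card_gt0P; exists i; rewrite inE.
have [x0 | x_neq0] := eqVneq [set i | x i] set0.
  by apply: IH; rewrite x0 cards0.
have coef_x : anf_coef f [set i | x i] = false.
  apply: contraNF x_neq0 => coef.
  by rewrite -cards_eq0 -leqn0 -[X in _ <= X]deg0; exact: leq_bigmax_cond.
have below_x (y : pt m) :
    ([set i | y i] \subset [set i | x i]) && (y != x) -> f y = f [ffun => false].
  case/andP=> sub_yx neq_yx; apply: IH; rewrite -ltnS; apply: leq_trans le_xk.
  apply: proper_card; rewrite properEneq sub_yx andbT.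
  apply: contraNneq neq_yx => /setP eq_supp; apply/eqP/ffunP => i.
  by have := eq_supp i; rewrite !inE.
have card_below : #|[pred y : pt m | ([set i | y i] \subset [set i | x i]) && (y != x)]|
    = (2 ^ #|[set i | x i]|).-1.
  rewrite -card_pt_subset (cardsD1 x) !inE subxx add1n /=.
  by apply: eq_card => y; rewrite !inE andbC.
have odd_below : odd (2 ^ #|[set i | x i]|).-1.
  by rewrite -[odd _]negbK -oddS prednK ?expn_gt0 // oddX orbF cards_eq0 x_neq0.
move: coef_x; rewrite /anf_coef (bigD1 x) ?subxx //= (eq_bigr _ below_x).
by rewrite big_const iter_addb card_below odd_below andbT; case: (f x); case: (f _).
Qed.

Lemma rank_le_pad m l (P : fn m) r : rank_le l P r ->
  exists (Q : 'I_r -> fn m) (Gam : {ffun {ffun 'I_r -> bool} -> bool}),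
    (forall j, deg (Q j) <= l) /\ forall x, P x = Gam [ffun j => Q j x].
Proof.
case=> k [/andP [_ le_kr] [Q [deg_Q [Gam PE]]]].
exists (fun j => if insub (val j) is Some j' then Q j' else fun _ => false).
exists [ffun y : {ffun 'I_r -> bool} => Gam [ffun j => y (widen_ord le_kr j)]].
split=> [j | x]; first by case: insubP => [j' _ _ | _]; rewrite ?deg_false.
by rewrite PE ffunE; congr Gam; apply/ffunP => j; rewrite !ffunE /= valK.
Qed.

Lemma not_regular_decomposition r m K (F : factor m K) :
  (forall i, 0 < deg (F i)) -> ~ regular r F ->
  exists (lam : {ffun 'I_K -> bool}) (i0 : 'I_K) (Gam : {ffun {ffun 'I_r -> bool} -> bool})
         (Q : 'I_r -> fn m),
    [/\ lam i0, forall j, deg (Q j) < deg (F i0)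
      & forall x, lincomb F lam x = Gam [ffun j => Q j x]].
Proof.
move=> deg_pos irreg.
have [lam [[i lam_i] low_rank]] : exists lam : {ffun 'I_K -> bool}, (exists i, lam i) /\
    rank_le (lindeg F lam).-1 (lincomb F lam) r.
  by apply: NNPP => no_lam; apply: irreg => lam nz_lam rk; apply: no_lam; exists lam.
have lam_gt0 : 0 < #|[pred i | lam i]| by apply/card_gt0P; exists i.
have [i0 lam_i0 maxE] := eq_bigmax_cond (fun i => deg (F i)) lam_gt0.
have lindegE : lindeg F lam = deg (F i0) by rewrite -maxE; apply: eq_bigl.
have [Q [Gam [deg_Q QE]]] := rank_le_pad low_rank.
exists lam, i0, Gam, Q; split=> // j.
by rewrite -(prednK (deg_pos i0)) ltnS -lindegE deg_Q.
Qed.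

Lemma sum_dimv d m K (F : factor m K) :
  \sum_(1 <= l < d.+1) dimv F l = #|[set i | 0 < deg (F i) <= d]|.
Proof.
rewrite -sum1dep_card [RHS]big_mkcond /=.
under eq_bigr do rewrite /dimv -sum1dep_card big_mkcond /=.
rewrite exchange_big /=; apply: eq_bigr => i _.
rewrite -big_mkcond /= (eq_bigl (fun l => l == deg (F i))) => [|l]; last exact: eq_sym.
by rewrite big_nat1_eq ltnS.
Qed.

Lemma has_dimvec_deg_range d m K (F : factor m K) M :
  has_dimvec d F M -> forall i, 0 < deg (F i) <= d.
Proof.
case=> _ [dimM sumM].
have /setP full : [set i | 0 < deg (F i) <= d] = setT.
  apply/eqP; rewrite eqEcard subsetT cardsT card_ord -sum_dimv.
  by rewrite (@eq_big_nat _ _ _ 1 d.+1 _ M) -?sumM ?leqnn // => l; rewrite ltnS; apply: dimM.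
by move=> i; have := full i; rewrite !inE.
Qed.

Lemma has_dimvec_profile d m K (F : factor m K) (D : 'I_K -> nat) :
  (forall i, deg (F i) = D i) -> (forall i, 0 < D i <= d) ->
  has_dimvec d F (fun l => #|[set i | D i == l]|).
Proof.
move=> deg_F D_range.
have dimvE l : dimv F l = #|[set i | D i == l]|.
  by apply: eq_card => i; rewrite !inE deg_F.
split; [|split] => [i | l _ | ]; first by rewrite deg_F; case/andP: (D_range i).
  exact: dimvE.
rewrite -(eq_bigr _ (fun l _ => dimvE l)) sum_dimv -[LHS]card_ord -cardsT.
by apply: eq_card => i; rewrite !inE deg_F D_range.
Qed.

Section Regularization.

Variable d : nat.

Definition dimvec_lexi (M : nat -> nat) : d.-tuplelexi nat := [tuple M (d - i) | i < d].

Lemma dimvec_lexi_lt (M N : nat -> nat) l : 0 < l <= d ->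
  (forall l', l < l' <= d -> N l' = M l') -> N l < M l ->
  (dimvec_lexi N < dimvec_lexi M)%O.
Proof.
move=> /andP [l_gt0 l_le_d] eq_above lt_at; apply/ltxi_tuplePlt.
have lt_dl : d - l < d by lia.
exists (Ordinal lt_dl) => [i lt_i|]; rewrite !tnth_mktuple /=.
  by move: lt_i => /= lt_i; apply: eq_above; lia.
by rewrite subKn.
Qed.

Definition regularizable K (m : nat -> nat) (F : forall n, factor (m n) K) : Prop :=
  exists (L : nat) (g : nat -> nat) (H : forall n, factor (m (g n)) L)
         (Gamma : {ffun 'I_L -> bool} -> {ffun 'I_K -> bool}),
    factor_seq d H /\ fully_regular H /\
    (forall n, g n < g n.+1) /\
    (forall n (x : pt (m (g n))),
        Gamma [ffun j => H n j x] = [ffun i => F (g n) i x]).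

Lemma regularizable_refine K L m (F : forall n, factor (m n) K)
    (g : nat -> nat) (G : forall n, factor (m (g n)) L)
    (Gamma : {ffun 'I_L -> bool} -> {ffun 'I_K -> bool}) :
  (forall n, g n < g n.+1) ->
  (forall n x, Gamma [ffun j => G n j x] = [ffun i => F (g n) i x]) ->
  regularizable G -> regularizable F.
Proof.
move=> g_incr GammaE [L' [g' [H [Gamma' [facH [regH [g'_incr Gamma'E]]]]]]].
exists L', (g \o g'), H, (Gamma \o Gamma'); do 3!split=> //.
  by move=> n; apply: (homo_ltn ltn_trans g_incr); apply: g'_incr.
by move=> n x /=; rewrite Gamma'E GammaE.
Qed.

Lemma regularizable_fully_regular K m (F : forall n, factor (m n) K) :
  factor_seq d F -> fully_regular F -> regularizable F.
Proof. by move=> facF regF; exists K, id, F, id. Qed.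

Section Split.

Variables (K r : nat) (m : nat -> nat).
Variables (F : forall n, factor (m n) K) (Q : forall n, 'I_r -> fn (m n)).
Arguments F : clear implicits.
Arguments Q : clear implicits.
Variables (lam : {ffun 'I_K -> bool}) (i0 : 'I_K) (Gam : {ffun {ffun 'I_r -> bool} -> bool}).
Variables (DF : 'I_K -> nat) (e : 'I_r -> nat) (c : 'I_r -> bool).
Hypothesis DF_range : forall i, 0 < DF i <= d.
Hypothesis deg_F : forall n i, deg (F n i) = DF i.
Hypothesis deg_Q : forall n j, deg (Q n j) = e j.
Hypothesis e_lt : forall j, e j < DF i0.
Hypothesis Q_at0 : forall n j, Q n j [ffun => false] = c j.
Hypothesis lam_i0 : lam i0.
Hypothesis lincombE : forall n x, lincomb (F n) lam x = Gam [ffun j => Q n j x].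

Definition kept : pred ('I_K + 'I_r) :=
  fun u => match u with inl i => i != i0 | inr j => 0 < e j end.

Definition split_deg (u : 'I_K + 'I_r) : nat :=
  match u with inl i => DF i | inr j => e j end.

Definition split_poly n (u : 'I_K + 'I_r) : fn (m n) :=
  match u with inl i => F n i | inr j => Q n j end.
Arguments split_poly : clear implicits.

Definition split_factor n : factor (m n) #|kept| := fun k => split_poly n (enum_val k).
Arguments split_factor : clear implicits.

(* At a dropped index the value is forced: a degree-0 [Q n j] is the constant [c j], and the
   entry at [inl i0] is never read. *)
Definition split_value (z : {ffun 'I_#|kept| -> bool}) (u : 'I_K + 'I_r) : bool :=
  if [pick k | enum_val k == u] is Some k then z k
  else if u is inr j then c j else false.

Definition unsplit (z : {ffun 'I_#|kept| -> bool}) : {ffun 'I_K -> bool} :=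
  [ffun i => if i == i0 then
     Gam [ffun j => split_value z (inr j)]
       (+) \big[addb/false]_(i' | lam i' && (i' != i0)) split_value z (inl i')
   else split_value z (inl i)].

Lemma split_valueE n x u : u != inl i0 ->
  split_value [ffun k => split_factor n k x] u = split_poly n u x.
Proof.
rewrite /split_value; case: pickP => [k /eqP <- _ | no_k u_neq]; first by rewrite ffunE.
have {no_k} : u \notin kept.
  by apply/negP => u_in; have := no_k (enum_rank_in u_in u); rewrite enum_rankK_in ?eqxx.
case: u u_neq => [i | j] /=; first by rewrite negbK => + /eqP eq_i; rewrite eq_i eqxx.
rewrite -eqn0Ngt => _ /eqP e0; rewrite -(Q_at0 n j); symmetry.
by apply: deg_eq0_const; rewrite deg_Q.
Qed.

Lemma unsplitE n x : unsplit [ffun k => split_factor n k x] = [ffun i => F n i x].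
Proof.
apply/ffunP => i; rewrite !ffunE; have [-> | neq_i] := eqVneq i i0; last first.
  by rewrite split_valueE.
have -> : [ffun j => split_value [ffun k => split_factor n k x] (inr j)] = [ffun j => Q n j x].
  by apply/ffunP => j; rewrite !ffunE split_valueE.
rewrite -lincombE /lincomb (bigD1 i0) //= [X in _ (+) X](eq_bigr (fun i => F n i x)) ?addbK //.
by move=> i1 /andP [_ neq]; rewrite split_valueE.
Qed.

Lemma deg_split_factor n (k : 'I_#|kept|) : deg (split_factor n k) = split_deg (enum_val k).
Proof. by rewrite /split_factor; case: (enum_val k) => [i | j] /=. Qed.

Lemma split_deg_range (k : 'I_#|kept|) : 0 < split_deg (enum_val k) <= d.
Proof.
case: (enum_val k) (enum_valP k) => [i | j]; rewrite unfold_in /= => kept_u.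
  exact: DF_range.
by rewrite kept_u /=; apply: ltnW (leq_trans (e_lt j) _); case/andP: (DF_range i0).
Qed.

Lemma card_split_deg l : DF i0 <= l ->
  #|[set k : 'I_#|kept| | split_deg (enum_val k) == l]| + (DF i0 == l)
  = #|[set i | DF i == l]|.
Proof.
move=> le_l; rewrite -!sum1dep_card.
rewrite -(big_enum_val_cond (A := kept) (fun u => split_deg u == l) (fun _ => 1)).
rewrite big_sumType /= [X in _ + X + _]big_pred0 => [|j]; last first.
  by rewrite (ltn_eqF (leq_trans (e_lt j) le_l)) andbF.
rewrite addn0; have [<- | neq_l] := eqVneq (DF i0) l.
  rewrite [RHS](bigD1 i0) //= addnC; congr (_ + _).
  by apply: eq_bigl => i; rewrite unfold_in /= andbC.
rewrite addn0; apply: eq_bigl => i; rewrite unfold_in /=.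
by case: eqVneq => [-> | _]; rewrite ?(negbTE neq_l).
Qed.

Lemma split_refines (M : nat -> nat) :
  (forall l, 0 < l <= d -> #|[set i | DF i == l]| = M l) ->
  exists L (G : forall n, factor (m n) L)
         (Gamma : {ffun 'I_L -> bool} -> {ffun 'I_K -> bool}) (M1 : nat -> nat),
    [/\ forall n x, Gamma [ffun j => G n j x] = [ffun i => F n i x],
        forall n, has_dimvec d (G n) M1 & (dimvec_lexi M1 < dimvec_lexi M)%O].
Proof.
move=> ME; exists #|kept|, split_factor, unsplit.
exists (fun l => #|[set k : 'I_#|kept| | split_deg (enum_val k) == l]|).
split=> [n x | n |]; first exact: unsplitE.
  exact: has_dimvec_profile (deg_split_factor n) split_deg_range.
have /andP [DF_pos DF_le] := DF_range i0.
apply: (dimvec_lexi_lt (l := DF i0)) => [| l /andP [lt_l le_l] |]; first by rewrite DF_pos.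
  rewrite -ME ?(ltn_trans DF_pos lt_l) // -card_split_deg ?(ltnW lt_l) //.
  by rewrite ltn_eqF ?addn0.
by rewrite -ME ?DF_pos // -card_split_deg // eqxx addn1.
Qed.

End Split.

Definition low_rank_data r m K (F : factor m K) (DF : {ffun 'I_K -> 'I_d.+1})
    (lam : {ffun 'I_K -> bool}) (i0 : 'I_K) (Gam : {ffun {ffun 'I_r -> bool} -> bool})
    (e : {ffun 'I_r -> 'I_d.+1}) (c : {ffun 'I_r -> bool}) (Q : 'I_r -> fn m) : Prop :=
  [/\ forall i, deg (F i) = DF i,
      forall j, deg (Q j) = e j /\ Q j [ffun => false] = c j,
      forall j, e j < DF i0, lam i0
    & forall x, lincomb F lam x = Gam [ffun j => Q j x]].

Lemma not_regular_low_rank_data r m K (F : factor m K) M :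
  has_dimvec d F M -> ~ regular r F ->
  exists DF lam i0 Gam e c, exists Q : 'I_r -> fn m, low_rank_data F DF lam i0 Gam e c Q.
Proof.
move=> dimF irreg; have deg_range := has_dimvec_deg_range dimF.
have deg_pos i : 0 < deg (F i) by case/andP: (deg_range i).
have deg_lt i : deg (F i) < d.+1 by rewrite ltnS; case/andP: (deg_range i).
have [lam [i0 [Gam [Q [lam_i0 deg_Q QE]]]]] := not_regular_decomposition deg_pos irreg.
have deg_Q_lt j : deg (Q j) < d.+1 := ltn_trans (deg_Q j) (deg_lt i0).
exists [ffun i => inord (deg (F i))], lam, i0, Gam.
exists [ffun j => inord (deg (Q j))], [ffun j => Q j [ffun => false]], Q.
by split=> // [i | j | j]; rewrite !ffunE ?inordK.
Qed.

Lemma not_fully_regular_refine K m (F : forall n, factor (m n) K) M :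
  (forall n, has_dimvec d (F n) M) -> ~ fully_regular F ->
  exists L g (G : forall n, factor (m (g n)) L)
         (Gamma : {ffun 'I_L -> bool} -> {ffun 'I_K -> bool}) (M1 : nat -> nat),
    [/\ forall n, g n < g n.+1,
        forall n x, Gamma [ffun j => G n j x] = [ffun i => F (g n) i x],
        forall n, has_dimvec d (G n) M1 & (dimvec_lexi M1 < dimvec_lexi M)%O].
Proof.
move=> dimF irregF.
have [r often_irreg] : exists r, infinitely_often (fun n => ~ regular r (F n)).
  apply: NNPP => no_r; apply: irregF => r; apply: NNPP => not_ev; apply: no_r.
  by exists r; apply: often_not_eventually.
have often_data : infinitely_often (fun n =>
    exists DF lam i0 Gam e c, exists Q : 'I_r -> _, low_rank_data (F n) DF lam i0 Gam e c Q).
  move=> N; have [n le_Nn irreg] := often_irreg N.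
  by exists n => //; apply: not_regular_low_rank_data (dimF n) irreg.
have [DF often1] := often_pigeon often_data.
have [lam often2] := often_pigeon often1.
have [i0 often3] := often_pigeon often2.
have [Gam often4] := often_pigeon often3.
have [e often5] := often_pigeon often4.
have [c often6] := often_pigeon often5.
have [g [g_incr data_g]] := often_subseq often6.
have [Q dataQ] := dependent_choice data_g.
have deg_F k i : deg (F (g k) i) = DF i by case: (dataQ k).
have deg_Q k j : deg (Q k j) = e j by case: (dataQ k) => _ /(_ j) [].
have Q_at0 k j : Q k j [ffun => false] = c j by case: (dataQ k) => _ /(_ j) [].
have [_ _ e_lt lam_i0 _] := dataQ 0.
have lincombE k x : lincomb (F (g k)) lam x = Gam [ffun j => Q k j x].
  by case: (dataQ k).
have DF_range i : 0 < DF i <= d.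
  by rewrite -(deg_F 0); exact: (has_dimvec_deg_range (dimF (g 0)) i).
have ME l : 0 < l <= d -> #|[set i | (DF i : nat) == l]| = M l.
  case: (dimF (g 0)) => _ [dimM _] /dimM <-.
  by apply: eq_card => i; rewrite !inE deg_F.
have [L [G [Gamma [M1 [GammaE dimG ltM]]]]] :=
  split_refines (F := fun k => F (g k)) DF_range deg_F deg_Q e_lt Q_at0 lam_i0 lincombE ME.
by exists L, g, G, Gamma, M1.
Qed.

Lemma regularizable_dimvec K m (F : forall n, factor (m n) K) M :
  (forall n, has_dimvec d (F n) M) -> regularizable F.
Proof.
move: {2}(dimvec_lexi M) (erefl (dimvec_lexi M)) => t.
elim/(@ssrcomplements.ltxwf _ _ ltn_ind d): t => t IH in K m F M * => tE dimF.
have [regF | irregF] := classic (fully_regular F).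
  by apply: regularizable_fully_regular => //; exists M.
have [L [g [G [Gamma [M1 [g_incr GammaE dimG ltM]]]]]] :=
  not_fully_regular_refine dimF irregF.
apply: regularizable_refine g_incr GammaE _.
by apply: (IH _ _ _ _ _ _ erefl dimG); rewrite -tE.
Qed.

End Regularization.

Theorem lemmaA3 (d K : nat) (m : nat -> nat) (F : forall n, factor (m n) K) :
  0 < d -> factor_seq d F ->
  exists (L : nat) (g : nat -> nat) (H : forall n, factor (m (g n)) L)
         (Gamma : {ffun 'I_L -> bool} -> {ffun 'I_K -> bool}),
    factor_seq d H /\ fully_regular H /\
    (forall n, g n < g n.+1) /\
    (forall n (x : pt (m (g n))),
        Gamma [ffun j => H n j x] = [ffun i => F (g n) i x]).
Proof.
by move=> _ [M dimF]; apply: regularizable_dimvec dimF.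
Qed.
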